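(* Let $A\subseteq\mathbb{N}$ and $\alpha\ge-1$. For every $x\in[\underline{d}_\alpha(A),\overline{d}_\alpha(A)]$ there is a free ultrafilter $\mathcal{F}$ on $\mathbb{N}$ such that $\mu_\alpha^{\mathcal{F}}(A)=x$.
   Context: $\mathbb{N}=\{1,2,3,\dots\}$. For $\alpha\ge-1$ and $A\subseteq\mathbb{N}$ put $A_\alpha(n)=\sum_{k=1}^n\chi_A(k)k^\alpha$ (so $\mathbb{N}_\alpha(n)=\sum_{k=1}^nk^\alpha$), $\underline{d}_\alpha(A)=\liminf_{n\to\infty}\frac{A_\alpha(n)}{\mathbb{N}_\alpha(n)}$ and $\overline{d}_\alpha(A)=\limsup_{n\to\infty}\frac{A_\alpha(n)}{\mathbb{N}_\alpha(n)}$. For a free ultrafilter $\mathcal{F}$ and a bounded real sequence $(x_n)$, $\mathcal{F}\text{-}\lim x_n$ is the unique real $L$ with $\{n;|x_n-L|<\varepsilon\}\in\mathcal{F}$ for every $\varepsilon>0$. Define $\mu_\alpha^{\mathcal{F}}(A)=\mathcal{F}\text{-}\lim\frac{A_\alpha(n)}{\mathbb{N}_\alpha(n)}$. *)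

From Stdlib Require Import Reals.
From Coquelicot Require Import Coquelicot.
Open Scope R_scope.

(* A subset A of N = {1,2,...} is represented by a boolean predicate on nat;
   its value at 0 is irrelevant (0 never enters the sums). *)

Fixpoint A_alpha (alpha : R) (A : nat -> bool) (n : nat) : R :=
  match n with
  | O => 0
  | S m => A_alpha alpha A m + (if A (S m) then Rpower (INR (S m)) alpha else 0)
  end.

Definition N_alpha (alpha : R) (n : nat) : R := A_alpha alpha (fun _ => true) n.

(* the ratio A_alpha(n) / N_alpha(n)  (the n = 0 term, 0/0, is irrelevant) *)
Definition dens_ratio (alpha : R) (A : nat -> bool) (n : nat) : R :=
  A_alpha alpha A n / N_alpha alpha n.

Definition lower_dens (alpha : R) (A : nat -> bool) : Rbar :=
  LimInf_seq (dens_ratio alpha A).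
Definition upper_dens (alpha : R) (A : nat -> bool) : Rbar :=
  LimSup_seq (dens_ratio alpha A).

Definition is_ultrafilter (F : (nat -> Prop) -> Prop) : Prop :=
  F (fun _ => True) /\
  ~ F (fun _ => False) /\
  (forall S T : nat -> Prop, F S -> (forall n, S n -> T n) -> F T) /\
  (forall S T : nat -> Prop, F S -> F T -> F (fun n => S n /\ T n)) /\
  (forall S : nat -> Prop, F S \/ F (fun n => ~ S n)).

(* free: contains no singleton (equivalently, the intersection of its members is empty) *)
Definition is_free_ultrafilter (F : (nat -> Prop) -> Prop) : Prop :=
  is_ultrafilter F /\ forall m : nat, ~ F (fun n => n = m).

Definition is_F_lim (F : (nat -> Prop) -> Prop) (x : nat -> R) (L : R) : Prop :=
  forall eps : R, 0 < eps -> F (fun n => Rabs (x n - L) < eps).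

Definition mu_alpha_F_is (alpha : R) (F : (nat -> Prop) -> Prop) (A : nat -> bool) (L : R)
  : Prop := is_F_lim F (dens_ratio alpha A) L.

From Stdlib Require Import Reals Lra Lia Classical.
From Coquelicot Require Import Coquelicot.
From mathcomp Require filter.
Open Scope R_scope.

(* Consecutive ratios A_alpha(n)/N_alpha(n) differ by at most the relative weight
   (n+1)^alpha / N_alpha(n+1) of the new term, which tends to 0.  A sequence with
   vanishing steps that is below x + eps and above x - eps infinitely often must
   enter (x - eps, x + eps) infinitely often, so every x between the lower and upper
   densities is a cluster point of the ratios.  The tails of the sets
   {n | |ratio n - x| < eps} generate a proper filter containing all cofinite sets,
   and any ultrafilter extending it is free with F-limit x.  The argument works for
   every real alpha. *)

Definition cluster_point (u : nat -> R) (x : R) : Prop :=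
  forall eps, 0 < eps -> forall m, exists n, (m <= n)%nat /\ Rabs (u n - x) < eps.

Lemma LimInf_seq_le_often (u : nat -> R) (x : R) :
  Rbar_le (LimInf_seq u) x ->
  forall eps, 0 < eps -> forall m, exists n, (m <= n)%nat /\ u n < x + eps.
Proof.
  intros Hx eps Heps m.
  destruct (ex_LimInf_seq u) as [l Hl].
  rewrite (is_LimInf_seq_unique _ _ Hl) in Hx.
  destruct l as [l| |]; simpl in Hx, Hl.
  - destruct (proj1 (Hl (mkposreal eps Heps)) m) as [n [Hn Hu]].
    exists n; simpl in Hu; split; [exact Hn | lra].
  - contradiction.
  - exact (Hl (x + eps) m).
Qed.

Lemma LimSup_seq_ge_often (u : nat -> R) (x : R) :
  Rbar_le x (LimSup_seq u) ->
  forall eps, 0 < eps -> forall m, exists n, (m <= n)%nat /\ x - eps < u n.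
Proof.
  intros Hx eps Heps m.
  destruct (ex_LimSup_seq u) as [l Hl].
  rewrite (is_LimSup_seq_unique _ _ Hl) in Hx.
  destruct l as [l| |]; simpl in Hx, Hl.
  - destruct (proj1 (Hl (mkposreal eps Heps)) m) as [n [Hn Hu]].
    exists n; simpl in Hu; split; [exact Hn | lra].
  - exact (Hl (x - eps) m).
  - contradiction.
Qed.

Lemma exists_crossing (P : nat -> Prop) (m n : nat) :
  (m <= n)%nat -> ~ P m -> P n -> exists k, (m <= k)%nat /\ ~ P k /\ P (S k).
Proof.
  intros Hmn Hm. induction Hmn as [|n Hmn IH]; intros Hn; [contradiction|].
  destruct (classic (P n)) as [Hp|Hp].
  - exact (IH Hp).
  - exists n; auto.
Qed.

Lemma cluster_point_of_vanishing_steps (u : nat -> R) (x : R) :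
  is_lim_seq (fun n => u (S n) - u n) 0 ->
  Rbar_le (LimInf_seq u) x -> Rbar_le x (LimSup_seq u) ->
  cluster_point u x.
Proof.
  intros Hsteps Hinf Hsup eps Heps m.
  destruct (proj2 (is_lim_seq_spec _ _) Hsteps (mkposreal eps Heps)) as [M HM].
  simpl in HM.
  destruct (LimInf_seq_le_often u x Hinf eps Heps (max m M)) as [n1 [Hn1 Hbelow]].
  destruct (Rlt_le_dec (x - eps) (u n1)) as [Hin | Hlow].
  { exists n1; split; [lia | apply Rabs_def1; lra]. }
  destruct (LimSup_seq_ge_often u x Hsup eps Heps n1) as [n2 [Hn2 Habove]].
  destruct (exists_crossing (fun k => x - eps < u k) n1 n2) as [k [Hk [Hkout Hkin]]];
    [exact Hn2 | lra | exact Habove |].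
  exists (S k); split; [lia |].
  pose proof (HM k ltac:(lia)) as Hstep. rewrite Rminus_0_r in Hstep.
  apply Rnot_lt_le in Hkout. apply Rabs_def2 in Hstep. apply Rabs_def1; lra.
Qed.

Lemma UltraFilter_is_ultrafilter (U : (nat -> Prop) -> Prop) :
  filter.UltraFilter U -> is_ultrafilter U.
Proof.
  intros HU.
  pose proof (@filter.ultra_proper _ _ HU) as HP.
  pose proof (filter.filter_not_empty U) as Hne.
  repeat split.
  - apply filter.filterT.
  - exact Hne.
  - intros S T HS HST. exact (filter.filterS HST HS).
  - intros S T HS HT. exact (filter.filterI HS HT).
  - intros S. exact (filter.in_ultra_setVsetC S HU).
Qed.

Lemma cluster_point_free_ultrafilter_lim (u : nat -> R) (x : R) :
  cluster_point u x -> exists F, is_free_ultrafilter F /\ is_F_lim F u x.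
Proof.
  intros Hcl.
  pose (G := fun S : nat -> Prop => exists eps, 0 < eps /\
               exists m, forall n, (m <= n)%nat -> Rabs (u n - x) < eps -> S n).
  assert (HG : filter.Filter G).
  { split.
    - exists 1; split; [lra | exists O; intros; exact I].
    - intros S T [e1 [He1 [m1 H1]]] [e2 [He2 [m2 H2]]].
      exists (Rmin e1 e2); split; [now apply Rmin_pos |].
      exists (max m1 m2); intros n Hn Hr; split.
      + apply H1; [lia | pose proof (Rmin_l e1 e2); lra].
      + apply H2; [lia | pose proof (Rmin_r e1 e2); lra].
    - intros S T HST [e [He [m H]]].
      exists e; split; [exact He |]. exists m; intros n Hn Hr. exact (HST n (H n Hn Hr)). }
  assert (HGproper : filter.ProperFilter G).
  { apply filter.Build_ProperFilter_ex; [| exact HG].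
    intros S [e [He [m H]]]. destruct (Hcl e He m) as [n [Hn Hr]].
    exists n; exact (H n Hn Hr). }
  destruct (filter.ultraFilterLemma HGproper) as [U [HU HGU]].
  exists U; split; [split |].
  - exact (UltraFilter_is_ultrafilter U HU).
  - intros m Hm.
    assert (Htail : U (fun n => (S m <= n)%nat)).
    { apply HGU. exists 1; split; [lra |]. exists (S m); intros n Hn _; exact Hn. }
    destruct (UltraFilter_is_ultrafilter U HU) as [_ [Hempty [Hmono [Hcap _]]]].
    apply Hempty. apply (Hmono _ _ (Hcap _ _ Hm Htail)). intros n [-> Hn]; lia.
  - intros eps Heps. apply HGU. exists eps; split; [exact Heps |].
    exists O; intros n _ Hr; exact Hr.
Qed.

Lemma Rpower_gt0 (x a : R) : 0 < Rpower x a.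
Proof. apply exp_pos. Qed.

Lemma Rpower_le_nonpos (a x y : R) : a <= 0 -> 0 < x <= y -> Rpower y a <= Rpower x a.
Proof.
  intros Ha Hxy. unfold Rpower.
  destruct (Rle_lt_or_eq_dec _ _ (Rmult_le_compat_neg_l a (ln x) (ln y) Ha
              (ln_le x y (proj1 Hxy) (proj2 Hxy)))) as [Hlt | ->].
  - left. now apply exp_increasing.
  - apply Rle_refl.
Qed.

Lemma A_alpha_le_N_alpha (a : R) (A : nat -> bool) (n : nat) :
  0 <= A_alpha a A n <= N_alpha a n.
Proof.
  induction n as [|n IH]; [unfold N_alpha; simpl; lra |].
  unfold N_alpha in *; cbn [A_alpha].
  pose proof (Rpower_gt0 (INR (S n)) a). destruct (A (S n)); lra.
Qed.

Lemma N_alpha_gt0 (a : R) (n : nat) : (0 < n)%nat -> 0 < N_alpha a n.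
Proof.
  intros Hn. destruct n as [|n]; [lia |].
  pose proof (A_alpha_le_N_alpha a (fun _ => true) n).
  pose proof (Rpower_gt0 (INR (S n)) a).
  unfold N_alpha in *; cbn [A_alpha]; lra.
Qed.

Lemma dens_ratio_step_le (a : R) (A : nat -> bool) (n : nat) : (0 < n)%nat ->
  Rabs (dens_ratio a A (S n) - dens_ratio a A n) <= Rpower (INR (S n)) a / N_alpha a (S n).
Proof.
  intros Hn. unfold dens_ratio, N_alpha; cbn [A_alpha]; fold (N_alpha a n).
  pose proof (N_alpha_gt0 a n Hn) as HN.
  pose proof (A_alpha_le_N_alpha a A n) as HA.
  pose proof (Rpower_gt0 (INR (S n)) a) as Hw.
  set (N := N_alpha a n) in *. set (w := Rpower (INR (S n)) a) in *.
  set (c := A_alpha a A n) in *.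
  set (b := if A (S n) then w else 0).
  assert (Hb : 0 <= b <= w) by (unfold b; destruct (A (S n)); lra).
  replace ((c + b) / (N + w) - c / N) with ((b * N - c * w) / N * / (N + w))
    by (field; lra).
  unfold Rdiv. rewrite Rabs_mult, (Rabs_pos_eq (/ (N + w))) by (left; apply Rinv_0_lt_compat; lra).
  apply Rmult_le_compat_r; [left; apply Rinv_0_lt_compat; lra |].
  rewrite Rabs_mult, (Rabs_pos_eq (/ N)) by (left; apply Rinv_0_lt_compat; lra).
  apply (Rmult_le_reg_r N); [exact HN |].
  rewrite Rmult_assoc, Rinv_l, Rmult_1_r by lra.
  apply Rabs_le; nra.
Qed.

Lemma N_alpha_ge_nonpos (a : R) (n : nat) :
  a <= 0 -> INR n * Rpower (INR n) a <= N_alpha a n.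
Proof.
  intros Ha. induction n as [|n IH]; [unfold N_alpha; simpl; lra |].
  unfold N_alpha in *; cbn [A_alpha].
  assert (Hmono : INR n * Rpower (INR (S n)) a <= INR n * Rpower (INR n) a).
  { destruct n as [|n]; [simpl; lra |].
    apply Rmult_le_compat_l; [apply pos_INR |].
    apply Rpower_le_nonpos; [exact Ha |].
    split; [apply lt_0_INR; lia | apply le_INR; lia]. }
  rewrite S_INR at 1. lra.
Qed.

Lemma N_alpha_ge_tail (a : R) (p j : nat) :
  0 <= a -> INR j * Rpower (INR (p + 1)) a <= N_alpha a (p + j).
Proof.
  intros Ha. induction j as [|j IH].
  - pose proof (A_alpha_le_N_alpha a (fun _ => true) (p + 0)). simpl; lra.
  - rewrite (Nat.add_succ_r p j), S_INR. unfold N_alpha in *; cbn [A_alpha].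
    assert (Rpower (INR (p + 1)) a <= Rpower (INR (S (p + j))) a).
    { apply Rle_Rpower_l; [exact Ha |].
      split; [apply lt_0_INR; lia | apply le_INR; lia]. }
    lra.
Qed.

(* For alpha <= 0 every term of N_alpha n is at least the last one; for alpha >= 0
   the last K terms are at least (n/2)^alpha. *)
Lemma N_alpha_ge_weight (a : R) : exists c, 0 < c /\
  forall K n, (2 * K <= n)%nat -> INR K * Rpower (INR n) a <= c * N_alpha a n.
Proof.
  destruct (Rle_lt_dec a 0) as [Ha | Ha].
  - exists 1; split; [lra |]. intros K n HKn.
    pose proof (N_alpha_ge_nonpos a n Ha).
    assert (INR K * Rpower (INR n) a <= INR n * Rpower (INR n) a).
    { apply Rmult_le_compat_r; [left; apply Rpower_gt0 | apply le_INR; lia]. }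
    lra.
  - set (h := Rpower (/ 2) a).
    assert (Hh : 0 < h) by apply Rpower_gt0.
    exists (/ h); split; [now apply Rinv_0_lt_compat |]. intros K n HKn.
    destruct (Nat.eq_dec n 0) as [-> | Hn].
    { replace K with 0%nat by lia. simpl; rewrite !Rmult_0_l.
      apply Rmult_le_pos; [left; now apply Rinv_0_lt_compat |].
      apply A_alpha_le_N_alpha. }
    pose proof (N_alpha_ge_tail a (n - K) K (Rlt_le _ _ Ha)) as Htail.
    replace (n - K + K)%nat with n in Htail by lia.
    assert (Hhalf : Rpower (INR n) a * h <= Rpower (INR (n - K + 1)) a).
    { unfold h. rewrite Rpower_mult_distr by (try apply lt_0_INR; lia || lra).
      apply Rle_Rpower_l; [lra |]. split.
      - apply Rmult_lt_0_compat; [apply lt_0_INR; lia | lra].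
      - rewrite plus_INR, minus_INR by lia. simpl.
        apply le_INR in HKn. rewrite mult_INR in HKn. simpl in HKn. lra. }
    apply (Rmult_le_reg_r h); [exact Hh |].
    replace (/ h * N_alpha a n * h) with (N_alpha a n) by (field; lra).
    rewrite Rmult_assoc.
    eapply Rle_trans; [| exact Htail].
    apply Rmult_le_compat_l; [apply pos_INR | exact Hhalf].
Qed.

Lemma weight_ratio_vanishes (a : R) :
  is_lim_seq (fun n => Rpower (INR n) a / N_alpha a n) 0.
Proof.
  destruct (N_alpha_ge_weight a) as [c [Hc Hdom]].
  apply is_lim_seq_spec. intros eps.
  destruct (INR_unbounded (c / eps)) as [K HK].
  assert (HK0 : 0 < INR K).
  { apply Rle_lt_trans with (c / eps); [| exact HK].
    left; apply Rdiv_lt_0_compat; [exact Hc | apply cond_pos]. }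
  assert (HKpos : (0 < K)%nat) by (apply INR_lt; exact HK0).
  exists (2 * K)%nat. intros n Hn.
  assert (HN : 0 < N_alpha a n) by (apply N_alpha_gt0; lia).
  pose proof (Hdom K n Hn) as HKn.
  pose proof (Rpower_gt0 (INR n) a) as Hw.
  assert (Hceps : c < eps * INR K).
  { apply Rgt_lt, Rlt_div_l in HK; [lra | apply cond_pos]. }
  rewrite Rminus_0_r, Rabs_pos_eq by (left; now apply Rdiv_lt_0_compat).
  apply Rlt_div_l; [exact HN |]. nra.
Qed.

Lemma dens_ratio_steps_vanish (a : R) (A : nat -> bool) :
  is_lim_seq (fun n => dens_ratio a A (S n) - dens_ratio a A n) 0.
Proof.
  apply is_lim_seq_abs_0.
  apply is_lim_seq_le_le_loc with (u := fun _ => 0)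
    (w := fun n => Rpower (INR (S n)) a / N_alpha a (S n)).
  - exists 1%nat. intros n Hn. split; [apply Rabs_pos |].
    apply dens_ratio_step_le; lia.
  - apply is_lim_seq_const.
  - apply (is_lim_seq_incr_1 (fun n => Rpower (INR n) a / N_alpha a n)).
    apply weight_ratio_vanishes.
Qed.

Theorem corollary4p2 (A : nat -> bool) (alpha : R) (halpha : -1 <= alpha) (x : R)
  (hlo : Rbar_le (lower_dens alpha A) (Finite x))
  (hhi : Rbar_le (Finite x) (upper_dens alpha A)) :
  exists F : (nat -> Prop) -> Prop,
    is_free_ultrafilter F /\ mu_alpha_F_is alpha F A x.
Proof.
  apply cluster_point_free_ultrafilter_lim, cluster_point_of_vanishing_steps.
  - apply dens_ratio_steps_vanish.
  - exact hlo.
  - exact hhi.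
Qed.
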